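(* There is an RB-function $f_{scc}$ with the following property: for every conservative $d$-dim Petri net $A$, every bottom SCC $X$ of $A$, and every $I\subseteq[1,d]$, writing $G=G_{(X,I)}=(Q,A,E)$ and $J=[1,d]\setminus I$, if there is $x\in X$ with $x(j)\geq f_{scc}(\|G\|,d)$ for all $j\in J$, then $G$ is proper.
   Context: A $d$-dim Petri net $A$ is a finite set of actions $(a_-,a_+)\in\mathbb{N}^d\times\mathbb{N}^d$; $\|A\|$ is the maximum of all entries of all $a_-,a_+$. Steps $x\xrightarrow{a}y$ iff $x=c+a_-$, $y=c+a_+$ for some $c\in\mathbb{N}^d$; $\xrightarrow{*}$ is the reflexive-transitive closure. $A$ is conservative if some $w\in(\mathbb{N}_+)^d$ has $\langle a_+-a_-,w\rangle=0$ for all actions. A bottom SCC of a net is a nonempty set $X$ of configurations with $\{y\mid x\xrightarrow{*}y\}=X$ for all $x\in X$. For $I\subseteq[1,d]$ and $x\in\mathbb{Z}^d$, $x|_I$ is the restriction to components in $I$; $X|_I=\{x|_I\mid x\in X\}$; $A|_I$ is the $|I|$-dim net with actions $((a_-)|_I,(a_+)|_I)$. The Petri net with states $G_{(X,I)}=(Q,A,E)$ has state set $Q=X|_I$ and edges $E=\{(p,a,q)\in Q\times A\times Q\mid p\xrightarrow{a}q\text{ in }A|_I\}$; $\|G\|=\max\{\|Q\|,\|A\|\}$ where $\|Q\|$ is the maximal component of elements of $Q$. $G$ is proper if $Q$ is a bottom SCC of the net $A|_I$. A function $f:\mathbb{N}^2\to\mathbb{N}$ is an RB-function if there are $c\in\mathbb{N}$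 and a polynomial $p$ with $f(m,d)\leq(c+m)^{2^{p(d)}}$ for all $m,d$. *)

From HB Require Import structures.
From mathcomp Require Import all_boot all_order all_algebra.
From Stdlib Require Import Relations.
Set Implicit Arguments. Unset Strict Implicit. Unset Printing Implicit Defensive.
Import Order.TTheory GRing.Theory Num.Theory.

Definition config (d : nat) := {ffun 'I_d -> nat}.
(* An action is a pair (a_-, a_+). *)
Definition action (d : nat) := (config d * config d)%type.
Definition net (d : nat) := seq (action d).

(* ||A|| : the maximum of all entries of all a_-, a_+ (0 for the empty net). *)
Definition net_norm d (A : net d) : nat :=
  \max_(a <- A) \max_(i < d) maxn (a.1 i) (a.2 i).

Definition step d (A : net d) (x y : config d) : Prop :=
  exists2 a, a \in A &
    exists c : config d, forall i, x i = c i + a.1 i /\ y i = c i + a.2 i.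

Definition reach d (A : net d) : relation (config d) :=
  clos_refl_trans (config d) (step A).

Definition conservative d (A : net d) : Prop :=
  exists w : 'I_d -> nat, (forall i, 0 < w i)%N /\
    forall a, a \in A ->
      (\sum_(i < d) ((a.2 i)%:Z - (a.1 i)%:Z) * (w i)%:Z = 0)%R.

Definition bottom_scc d (A : net d) (X : config d -> Prop) : Prop :=
  (exists x, X x) /\ forall x, X x -> forall y, reach A x y <-> X y.

(* Restriction x|_I, as an |I|-dimensional vector (components of I in
   increasing order). *)
Definition restr d (I : {set 'I_d}) (x : config d) : config #|I| :=
  [ffun k : 'I_#|I| => x (enum_val k)].

Arguments restr {d} I x.

Definition restr_net d (I : {set 'I_d}) (A : net d) : net #|I| :=
  map (fun a : action d => (restr I a.1, restr I a.2)) A.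

Arguments restr_net {d} I A.

Definition restr_set d (I : {set 'I_d}) (X : config d -> Prop)
  : config #|I| -> Prop :=
  fun q => exists2 x, X x & restr I x = q.

Arguments restr_set {d} I X _.

(* G_(X,I) = (Q, A, E) with Q = X|_I is proper iff Q is a bottom SCC of A|_I *)
Definition G_proper d (A : net d) (X : config d -> Prop) (I : {set 'I_d}) : Prop :=
  bottom_scc (restr_net I A) (restr_set I X).

Definition G_upper d (A : net d) (X : config d -> Prop) (I : {set 'I_d}) (m : nat)
  : Prop :=
  (forall q, restr_set I X q -> forall k, (q k <= m)%N) /\ (net_norm A <= m)%N.

(* m = ||G|| = max(||Q||, ||A||), i.e. the least upper bound of all
   components of elements of Q and all entries of A. *)
Definition G_norm_is d (A : net d) (X : config d -> Prop) (I : {set 'I_d}) (m : nat)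
  : Prop :=
  G_upper A X I m /\ forall m', G_upper A X I m' -> (m <= m')%N.

Definition RB_function (f : nat -> nat -> nat) : Prop :=
  exists (c : nat) (p : {poly nat}),
    forall m d, (f m d <= (c + m) ^ (2 ^ p.[d]%R))%N.

(* Fix x in X whose coordinates outside I are at least m (m+1)^d, where
   m = ||G||.  Every q in Q = X|_I is reachable from x, and projecting such a
   run onto I gives a path of A|_I inside Q.  Q has at most (m+1)^|I| elements,
   so this path can be shortened to fewer than (m+1)^d steps.  A step lowers a
   coordinate by at most ||A|| <= m, so the short path lifts back to a run of A
   from x that ends in some z in X with z|_I = q and all other coordinates
   still >= m.  Every step of A|_I enabled at q is then enabled at z, so Q is
   closed under A|_I; strong connectivity of Q is inherited from X. *)

From mathcomp Require Import all_boot all_algebra.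
From mathcomp Require Import zify.
From Stdlib Require Import Relations.
Set Implicit Arguments. Unset Strict Implicit.

Lemma leq_net_norm d (A : net d) a j :
  a \in A -> maxn (a.1 j) (a.2 j) <= net_norm A.
Proof.
move=> aA; apply: leq_trans (@leq_bigmax _ (fun i => maxn (a.1 i) (a.2 i)) j) _.
exact: (@leq_bigmax_seq _ _ xpredT
          (fun a : action d => \max_(i < d) maxn (a.1 i) (a.2 i))).
Qed.

Definition fires d (a : action d) (x y : config d) : bool :=
  [forall i, (a.1 i <= x i) && (y i == x i - a.1 i + a.2 i)].

Definition stepb d (A : net d) : rel (config d) :=
  fun x y => has (fun a => fires a x y) A.

Lemma stepP d (A : net d) x y : reflect (step A x y) (stepb A x y).
Proof.
apply: (iffP hasP) => [[a aA /forallP fa] | [a aA [c Hc]]].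
- exists a => //; exists [ffun i => x i - a.1 i] => i; rewrite ffunE.
  by have /andP[le_ax /eqP->] := fa i; rewrite subnK.
- exists a => //; apply/forallP => i; have [-> ->] := Hc i.
  by rewrite leq_addl addnK eqxx.
Qed.

Lemma step_restr d (A : net d) (I : {set 'I_d}) x y :
  step A x y -> step (restr_net I A) (restr I x) (restr I y).
Proof.
case=> a aA [c Hc]; exists (restr I a.1, restr I a.2); first exact: map_f.
by exists (restr I c) => k /=; rewrite !ffunE; apply: Hc.
Qed.

Lemma reach_restr d (A : net d) (I : {set 'I_d}) x y :
  reach A x y -> reach (restr_net I A) (restr I x) (restr I y).
Proof.
elim=> [u v /(step_restr I) | u | u v w _ Huv _ Hvw]; last exact: rt_trans Hvw.
  exact: rt_step.
exact: rt_refl.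
Qed.

Lemma clos_rt_path (T : Type) (U : eqType) (R : relation T) (f : T -> U)
    (e : rel U) x y :
  (forall u v, R u v -> e (f u) (f v)) -> clos_refl_trans T R x y ->
  exists s, [/\ path e (f x) s, last (f x) s = f y &
                forall v, v \in s -> exists2 z, clos_refl_trans T R x z & f z = v].
Proof.
move=> Rf /(clos_rt_rt1n T R); elim=> [u | u v w Ruv _ [s [es ls Rs]]].
  by exists [::].
exists (f v :: s); split => /=; [by rewrite Rf | done |].
move=> _ /predU1P[-> | /Rs[z Rvz <-]]; first by exists v => //; apply: rt_step.
by exists z => //; apply: rt_trans Rvz; apply: rt_step.
Qed.

Lemma uniq_bounded_size k m (s : seq (config k)) :
  uniq s -> (forall v, v \in s -> forall i, v i <= m) -> size s <= m.+1 ^ k.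
Proof.
move=> us bs.
pose box (u : {ffun 'I_k -> 'I_m.+1}) : config k := [ffun i => nat_of_ord (u i)].
have <- : size (codom box) = m.+1 ^ k by rewrite size_codom card_ffun !card_ord.
apply: uniq_leq_size us _ => v /bs bv.
have -> : v = box [ffun i => inord (v i)].
  by apply/ffunP => i; rewrite !ffunE inordK ?ltnS.
exact: codom_f.
Qed.

Section Lifting.

Variables (d : nat) (A : net d) (I : {set 'I_d}) (m : nat).
Hypothesis normA : net_norm A <= m.

Lemma step_restr_lift (y : config d) (r : config #|I|) :
  (forall j, j \notin I -> m <= y j) -> step (restr_net I A) (restr I y) r ->
  exists2 y', step A y y' &
    restr I y' = r /\ forall j, j \notin I -> y j <= y' j + m.
Proof.
move=> Hy [_ /mapP[a aA ->] [c Hc]].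
have norm_a j : a.1 j <= m /\ a.2 j <= m.
  by apply/andP; rewrite -geq_max (leq_trans (leq_net_norm j aA)).
have enabled j : a.1 j <= y j.
  have [jI | jJ] := boolP (j \in I).
    have := Hc (enum_rank_in jI j); rewrite /= !ffunE enum_rankK_in //.
    by move=> [-> _]; apply: leq_addl.
  by have [] := norm_a j; have := Hy j jJ; lia.
pose y' : config d := [ffun j => y j - a.1 j + a.2 j].
exists y'.
  by apply/stepP/hasP; exists a => //; apply/forallP => j; rewrite ffunE enabled /=.
split=> [|j _]; last by rewrite ffunE; have [] := norm_a j; have := enabled j; lia.
apply/ffunP => k; rewrite !ffunE.
by have := Hc k; rewrite /= !ffunE => -[-> ->]; rewrite addnK.
Qed.

(* Each step may lower a coordinate outside I by up to m, so a margin of m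
   per step, plus m to spare at the end, suffices. *)
Lemma path_restr_lift (y : config d) (s : seq (config #|I|)) :
  path (stepb (restr_net I A)) (restr I y) s ->
  (forall j, j \notin I -> m * (size s).+1 <= y j) ->
  exists2 z, reach A y z &
    restr I z = last (restr I y) s /\ forall j, j \notin I -> m <= z j.
Proof.
elim: s y => [|r s IHs] y /=.
  by move=> _ Hy; exists y; [apply: rt_refl | split=> // j /Hy; rewrite muln1].
move=> /andP[/stepP st ps] Hy.
have [|y' yy' [ry' Hy']] := step_restr_lift _ st.
  by move=> j /Hy; apply: leq_trans; rewrite leq_pmulr.
move: ps; rewrite -ry' => ps.
have [|z y'z [<- Hz]] := IHs y' ps.
  move=> j jI; have := leq_trans (Hy j jI) (Hy' j jI).
  by rewrite [m * _.+2]mulnS addnC leq_add2r.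
by exists z => //; apply: rt_trans y'z; apply: rt_step.
Qed.

End Lifting.

Section BottomSCC.

Variables (d : nat) (A : net d) (X : config d -> Prop) (I : {set 'I_d}) (m : nat).
Hypotheses (sccX : bottom_scc A X) (normA : net_norm A <= m).
Hypothesis boundQ : forall q, restr_set I X q -> forall k, q k <= m.
Variable x : config d.
Hypotheses (Xx : X x) (far_x : forall j, j \notin I -> m * m.+1 ^ d <= x j).

Lemma restr_set_far (q : config #|I|) :
  restr_set I X q ->
  exists2 z, X z & restr I z = q /\ forall j, j \notin I -> m <= z j.
Proof.
move=> [x1 Xx1 <-].
have stepb_restr u v : step A u v -> stepb (restr_net I A) (restr I u) (restr I v).
  by move/(step_restr I)/stepP.
have [s [ps ls Rs]] := clos_rt_path stepb_restr (proj2 (sccX.2 x Xx x1) Xx1).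
case: (shortenP ps) ls => s' ps' us' ss' ls'.
have short : (size s').+1 <= m.+1 ^ d.
  apply: leq_trans (uniq_bounded_size us' _) (leq_pexp2l _ _) => //.
    move=> _ /predU1P[-> | /ss' /Rs[z xz <-]]; apply: boundQ; first by exists x.
    by exists z => //; apply/(sccX.2 x Xx).
  by rewrite -[X in _ <= X]card_ord max_card.
have [|z xz [ez Hz]] := path_restr_lift normA ps'.
  by move=> j jI; apply: leq_trans (far_x jI); rewrite leq_mul2l short orbT.
by exists z; [apply/(sccX.2 x Xx) | rewrite ez ls'].
Qed.

Lemma restr_set_step (q r : config #|I|) :
  restr_set I X q -> step (restr_net I A) q r -> restr_set I X r.
Proof.
move=> /restr_set_far[z Xz [<- Hz]] /(step_restr_lift normA Hz)[y zy [ry _]].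
by exists y => //; apply/(sccX.2 z Xz); apply: rt_step.
Qed.

Lemma restr_set_reach (q r : config #|I|) :
  reach (restr_net I A) q r -> restr_set I X q -> restr_set I X r.
Proof.
move=> /(clos_rt_rt1n _ _ q r); elim=> // u v w st _ IH Qu.
by apply: IH; apply: restr_set_step st.
Qed.

Lemma restr_set_bottom_scc : bottom_scc (restr_net I A) (restr_set I X).
Proof.
split=> [|_ [x1 Xx1 <-] r]; first by exists (restr I x), x.
split=> [qr | [y Xy <-]]; first by apply: restr_set_reach qr _; exists x1.
by apply: reach_restr; apply/(sccX.2 x1 Xx1).
Qed.

End BottomSCC.

Lemma RB_function_mul_expS : RB_function (fun m d => m * m.+1 ^ d).
Proof.
exists 1, 'X%R => m d; rewrite hornerX add1n.
apply: (@leq_trans (m.+1 ^ d.+1)); first by rewrite expnS leq_mul2r leqnSn orbT.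
by rewrite leq_pexp2l // ltn_expl.
Qed.

Theorem proposition11 :
  exists f_scc : nat -> nat -> nat, RB_function f_scc /\
    forall (d : nat) (A : net d) (X : config d -> Prop) (I : {set 'I_d}) (m : nat),
      conservative A -> bottom_scc A X -> G_norm_is A X I m ->
      (exists2 x, X x & forall j : 'I_d, j \notin I -> (f_scc m d <= x j)%N) ->
      G_proper A X I.
Proof.
exists (fun m d => m * m.+1 ^ d); split; first exact: RB_function_mul_expS.
move=> d A X I m _ sccX [[boundQ normA] _] [x Xx far_x].
exact: (restr_set_bottom_scc sccX normA boundQ Xx far_x).
Qed.
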